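(* Let $n\ge 2$ and let $T$ be a uniformly random shifted standard Young tableau of shape $[\Delta_n]^{\mathrm{sh}}$. For every column $c$ with $1\le c<n-1$, the expected number of horizontal adjacencies of $T$ lying in column $c$ equals $1$; and for every row $r$ with $1\le r<n-1$, the expected number of vertical adjacencies of $T$ lying in row $r$ equals $1$.
   Context: $\Delta_n=(n-1,\dots,1)$, $[\Delta_n]^{\mathrm{sh}}=\{(i,j):1\le i\le j\le n-1\}$ (row $i$, column $j$). A shifted standard Young tableau of this shape is a bijection $T$ onto $[\binom n2]$ increasing along rows and columns. For $u=(i,j)$ in the shape, $(T,u)$ is a horizontal adjacency if $(i,j+1)$ is in the shape and $T(i,j+1)=T(u)+1$, a vertical adjacency if $(i+1,j)$ is in the shape and $T(i+1,j)=T(u)+1$; it lies in column $j$ and row $i$. *)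

From HB Require Import structures.
From mathcomp Require Import all_boot all_order all_algebra.
Set Implicit Arguments. Unset Strict Implicit. Unset Printing Implicit Defensive.

(* Cells are pairs (i,j) of naturals (row i, column j), 1-indexed as in the paper.
   The shifted staircase shape [Delta_n]^sh = {(i,j) : 1 <= i <= j <= n-1}. *)
Definition in_shape (n i j : nat) : bool := [&& 1 <= i, i <= j & j <= n - 1].

Definition ncells (n : nat) : nat := 'C(n, 2).

(* Off the shape, the
   filling is normalised to 0 (so fillings satisfying [is_SYT] correspond
   bijectively to shifted standard Young tableaux of the shape). *)
Definition filling (n : nat) := {ffun 'I_n * 'I_n -> 'I_(ncells n).+1}.

(* value of T at the cell (i,j), given as naturals (0 if out of range) *)
Definition tv {n : nat} (T : filling n) (i j : nat) : nat :=
  match insub i, insub j with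
  | Some a, Some b => nat_of_ord (T (a, b))
  | _, _ => 0
  end.

Definition is_SYT (n : nat) (T : filling n) : bool :=
  [&& [forall a : 'I_n, forall b : 'I_n,
         ~~ in_shape n a b ==> (nat_of_ord (T (a, b)) == 0)],
      [forall a : 'I_n, forall b : 'I_n,
         in_shape n a b ==> (0 < T (a, b))],
      [forall a : 'I_n, forall b : 'I_n, forall c : 'I_n, forall d : 'I_n,
         [&& in_shape n a b, in_shape n c d & T (a, b) == T (c, d)]
           ==> ((a, b) == (c, d))],
      [forall k : 'I_(ncells n).+1, (0 < k) ==>
         [exists a : 'I_n, exists b : 'I_n, in_shape n a b && (T (a, b) == k)]],
      [forall a : 'I_n, forall b : 'I_n,
         in_shape n a b && in_shape n a b.+1 ==> (tv T a b < tv T a b.+1)]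
    &
      [forall a : 'I_n, forall b : 'I_n,
         in_shape n a b && in_shape n a.+1 b ==> (tv T a b < tv T a.+1 b)]].

Definition SYTs (n : nat) : {set filling n} := [set T | @is_SYT n T].

Definition hadj_col (n : nat) (T : filling n) (c : nat) : nat :=
  #|[set a : 'I_n | [&& in_shape n a c, in_shape n a c.+1 &
                        tv T a c.+1 == (tv T a c).+1]]|.

Definition vadj_row (n : nat) (T : filling n) (r : nat) : nat :=
  #|[set b : 'I_n | [&& in_shape n r b, in_shape n r.+1 b &
                        tv T r.+1 b == (tv T r b).+1]]|.

Definition expect_SYT (n : nat) (X : filling n -> nat) : rat :=
  ((\sum_(T in SYTs n) X T)%:R / (#|SYTs n|)%:R)%R.

From HB Require Import structures.
From mathcomp Require Import all_boot all_order all_algebra.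
From mathcomp Require Import zify.
Set Implicit Arguments. Unset Strict Implicit. Unset Printing Implicit Defensive.
Import GRing.Theory Num.Theory.

(* Let Q be a set of cells of the shape that is closed under moving left or up,
   contains (1,1) and misses (n-1,n-1): the cells in columns <= c, or in rows <= r.
   In a tableau T, the walk m |-> [the cell of m lies in Q] starts inside Q and ends
   outside, so it exits Q once more often than it enters Q.  Exchanging the values k
   and k+1 maps the tableaux entering Q at step k bijectively onto those exiting Q at
   step k through non-adjacent cells.  Summed over all tableaux, the exits through
   adjacent cells are therefore as many as the tableaux; and these exits are exactly
   the adjacencies crossing the boundary of Q, i.e. the horizontal adjacencies in
   column c, resp. the vertical adjacencies in row r. *)

Definition transp k x := if x == k then k.+1 else if x == k.+1 then k else x.

Section Transposition.
Variable k : nat.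

Lemma transpK : involutive (transp k).
Proof. by move=> x; rewrite /transp; do !case: eqP; lia. Qed.

Lemma transp_inj : injective (transp k).
Proof. exact: inv_inj transpK. Qed.

Lemma transp_eq x m : (transp k x == m) = (x == transp k m).
Proof. by rewrite -{1}(transpK m) (inj_eq transp_inj). Qed.

Lemma transp_k : transp k k = k.+1.
Proof. by rewrite /transp eqxx. Qed.

Lemma transp_k1 : transp k k.+1 = k.
Proof. by rewrite /transp eqxx; case: eqP; lia. Qed.

Lemma transp_small x : x < k -> transp k x = x.
Proof. by rewrite /transp; do !case: eqP; lia. Qed.

Lemma transp_le x m : x <= m -> k < m -> transp k x <= m.
Proof. by rewrite /transp; do !case: eqP; lia. Qed.

Lemma transp_gt0 x : 0 < k -> 0 < x -> 0 < transp k x.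
Proof. by rewrite /transp; do !case: eqP; lia. Qed.

Lemma transp_lt x y : x < y -> (x, y) != (k, k.+1) -> transp k x < transp k y.
Proof. by rewrite /transp xpair_eqE; do !case: eqP; lia. Qed.

End Transposition.

Lemma telescope_bool (f : nat -> bool) m p : m <= p ->
  f m + \sum_(m <= k < p) (~~ f k && f k.+1 : nat) =
  f p + \sum_(m <= k < p) (f k && ~~ f k.+1 : nat).
Proof.
elim: p => [|p IH]; first by rewrite leqn0 => /eqP->; rewrite !big_geq.
rewrite leq_eqVlt ltnS => /orP[/eqP->|mp]; first by rewrite !big_geq.
by rewrite !big_nat_recr //=; have := IH mp; case: (f p); case: (f p.+1) => /=; lia.
Qed.

Lemma sum_in_involutive (I : finType) (A : {pred I}) (h : I -> I) (b c : pred I) :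
  involutive h -> (forall x, (h x \in A) && b (h x) = (x \in A) && c x) ->
  \sum_(x in A) (b x : nat) = \sum_(x in A) (c x : nat).
Proof.
move=> hK bc; rewrite big_mkcond [RHS]big_mkcond (reindex_inj (inv_inj hK)) /=.
apply: eq_bigr => x _; have := bc x.
by case: (h x \in A); case: (x \in A); case: (b (h x)); case: (c x).
Qed.

Lemma card_eq_sum_nat (I : finType) (A : {pred I}) (f : I -> nat) (P : pred nat) m p :
  {in A &, injective f} -> {in A, forall x, m <= f x < p} ->
  (forall k, m <= k < p -> P k = [exists x in A, f x == k]) ->
  #|A| = \sum_(m <= k < p) P k.
Proof.
move=> f_inj f_range hP; rewrite -sum1_card.
transitivity (\sum_(x in A) \sum_(m <= k < p) (f x == k : nat)).
  apply: eq_bigr => x xA; rewrite (eq_bigr (fun k => if k == f x then 1 else 0)).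
    by rewrite -big_mkcond big_nat1_eq f_range.
  by move=> k _; rewrite eq_sym; case: eqP.
rewrite exchange_big; apply: eq_big_nat => k /hP ->.
have [/existsP[x /andP[xA /eqP fx]]|/existsPn none] := boolP [exists x in A, f x == k].
  rewrite (bigD1 x) //= fx eqxx big1 // => y /andP[yA ne].
  by case: eqP => // fy; case/eqP: ne; apply: f_inj; rewrite ?fx ?fy.
by rewrite big1 // => x xA; have := none x; rewrite xA /= => /negbTE ->.
Qed.

Section Staircase.
Variable n : nat.
Local Notation N := (ncells n).
Implicit Types (T : filling n) (i j k m : nat).

Lemma in_shape_ord i j :
  in_shape n i j -> exists a b : 'I_n, (a : nat) = i /\ (b : nat) = j.
Proof.
rewrite /in_shape => /and3P[i1 ij jn].
have hj : j < n by lia.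
have hi : i < n by lia.
by exists (Ordinal hi), (Ordinal hj).
Qed.

Lemma tv_ord T (a b : 'I_n) : tv T a b = T (a, b).
Proof. by rewrite /tv !valK. Qed.

Lemma tvE T i j (hi : i < n) (hj : j < n) : tv T i j = T (Ordinal hi, Ordinal hj).
Proof. exact: (tv_ord T (Ordinal hi) (Ordinal hj)). Qed.

Lemma tv_out T i j : ~~ ((i < n) && (j < n)) -> tv T i j = 0.
Proof.
rewrite /tv negb_and => /orP[hi|hj]; first by rewrite insubN.
by case: insub => // a; rewrite insubN.
Qed.

Lemma tv_le T i j : tv T i j <= N.
Proof. by rewrite /tv; case: insub => // a; case: insub => // b; rewrite -ltnS. Qed.

Definition next_cell i j i' j' := ((i', j') == (i, j.+1)) || ((i', j') == (i.+1, j)).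

Record syt_spec T : Prop := SytSpec {
  syt_out : forall i j, ~~ in_shape n i j -> tv T i j = 0;
  syt_gt0 : forall i j, in_shape n i j -> 0 < tv T i j;
  syt_inj : forall i j i' j', in_shape n i j -> in_shape n i' j' ->
    tv T i j = tv T i' j' -> (i, j) = (i', j');
  syt_onto : forall m, 0 < m <= N -> exists i j, in_shape n i j /\ tv T i j = m;
  syt_lt : forall i j i' j', in_shape n i j -> in_shape n i' j' ->
    next_cell i j i' j' -> tv T i j < tv T i' j' }.

Lemma is_SYT_spec T : is_SYT T -> syt_spec T.
Proof.
case/and5P => /forallP out /forallP gt0 /forallP inj /forallP onto.
case/andP => /forallP row /forallP col.
split.
- move=> i j hs; have [/andP[hi hj]|/tv_out//] := boolP ((i < n) && (j < n)).
  by rewrite tvE; apply/eqP; exact: (implyP (forallP (out (Ordinal hi)) (Ordinal hj)) hs).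
- move=> i j hs; have [a [b [? ?]]] := in_shape_ord hs; subst i j.
  by rewrite tv_ord; exact: (implyP (forallP (gt0 a) b) hs).
- move=> i j i' j' hs hs'; have [a [b [? ?]]] := in_shape_ord hs.
  have [c [d [? ?]]] := in_shape_ord hs'; subst i j i' j'; rewrite !tv_ord => /val_inj e.
  have /implyP := forallP (forallP (forallP (inj a) b) c) d.
  by rewrite hs hs' e eqxx => /(_ isT)/eqP[-> ->].
- move=> m /andP[m0 mN]; have /implyP := onto (Ordinal (mN : m < N.+1)).
  case/(_ m0)/existsP => a /existsP[b /andP[hs /eqP e]].
  by exists a, b; rewrite tv_ord e.
- move=> i j i' j' hs hs' /orP[] /eqP[? ?]; subst i' j';
    have [a [b [? ?]]] := in_shape_ord hs; subst i j.
  + by apply: (implyP (forallP (row a) b)); rewrite hs hs'.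
  + by apply: (implyP (forallP (col a) b)); rewrite hs hs'.
Qed.

Lemma syt_spec_is_SYT T : syt_spec T -> is_SYT T.
Proof.
case=> sout sgt0 sinj sonto slt; apply/and5P; split; [..|apply/andP; split];
  do [apply/forallP => a; apply/forallP => b] || apply/forallP => k.
- by apply/implyP => /sout; rewrite tv_ord => ->.
- by apply/implyP => /sgt0; rewrite tv_ord.
- apply/forallP => c; apply/forallP => d; apply/implyP => /and3P[hs hs' /eqP e].
  have := sinj _ _ _ _ hs hs'; rewrite !tv_ord e => /(_ erefl)[/val_inj-> /val_inj->].
  by [].
- apply/implyP => k0; have [|i [j [hs e]]] := sonto k; first by rewrite k0 -ltnS ltn_ord.
  have [a [b [? ?]]] := in_shape_ord hs; subst i j; apply/existsP; exists a.
  by apply/existsP; exists b; rewrite hs; apply/eqP/val_inj; rewrite /= -tv_ord e.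
- by apply/implyP => /andP[hs hs']; apply: slt; rewrite // /next_cell eqxx.
- by apply/implyP => /andP[hs hs']; apply: slt; rewrite // /next_cell eqxx orbT.
Qed.

Lemma SYTsP T : reflect (syt_spec T) (T \in SYTs n).
Proof. by rewrite inE; apply: (iffP idP); [exact: is_SYT_spec | exact: syt_spec_is_SYT]. Qed.

Section Monotone.
Variable T : filling n.
Hypothesis sT : syt_spec T.

Lemma syt_row_mono i j j' :
  in_shape n i j -> in_shape n i j' -> j <= j' -> tv T i j <= tv T i j'.
Proof.
apply: (homo_leq_in (D := [pred j | in_shape n i j]) (f := tv T i) (r := leq)) => //.
- exact: leq_trans.
- by move=> a b; rewrite !inE /in_shape => ? ? c ?; rewrite inE /in_shape; lia.
- by move=> a ha hb; apply/ltnW/(syt_lt sT) => //; rewrite /next_cell eqxx.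
Qed.

Lemma syt_col_mono i i' j :
  in_shape n i j -> in_shape n i' j -> i <= i' -> tv T i j <= tv T i' j.
Proof.
apply: (homo_leq_in (D := [pred i | in_shape n i j]) (f := tv T ^~ j) (r := leq)) => //.
- exact: leq_trans.
- by move=> a b; rewrite !inE /in_shape => ? ? c ?; rewrite inE /in_shape; lia.
- by move=> a ha hb; apply/ltnW/(syt_lt sT) => //; rewrite /next_cell eqxx orbT.
Qed.

Lemma syt_mono i j i' j' : in_shape n i j -> in_shape n i' j' ->
  i <= i' -> j <= j' -> tv T i j <= tv T i' j'.
Proof.
move=> hs hs' ii' jj'; have hs'' : in_shape n i j' by move: hs hs'; rewrite /in_shape; lia.
exact: leq_trans (syt_row_mono hs hs'' jj') (syt_col_mono hs'' hs' ii').
Qed.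

Lemma tv_first : 2 <= n -> tv T 1 1 = 1.
Proof.
move=> n2; have [|i [j [hs e]]] := syt_onto sT (m := 1); first by rewrite bin_gt0.
have h11 : in_shape n 1 1 by rewrite /in_shape; lia.
have := syt_mono h11 hs; have := syt_gt0 sT h11; move: hs; rewrite /in_shape e; lia.
Qed.

Lemma tv_last : 2 <= n -> tv T n.-1 n.-1 = N.
Proof.
move=> n2; have [|i [j [hs e]]] := syt_onto sT (m := N); first by rewrite bin_gt0 n2 leqnn.
have hNN : in_shape n n.-1 n.-1 by rewrite /in_shape; lia.
have := syt_mono hs hNN; have := tv_le T n.-1 n.-1; move: hs; rewrite /in_shape e; lia.
Qed.

End Monotone.

Definition swap_values k T : filling n := [ffun p => inord (transp k (T p))].

Lemma tv_swap k T i j : 0 < k < N -> tv (swap_values k T) i j = transp k (tv T i j).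
Proof.
case/andP=> k0 kN; have [/andP[hi hj]|hij] := boolP ((i < n) && (j < n)); last first.
  by rewrite !tv_out // transp_small.
by rewrite !tvE ffunE inordK // ltnS transp_le // -ltnS.
Qed.

Lemma swap_valuesK k : k < N -> involutive (swap_values k).
Proof.
move=> kN T; apply/ffunP => p; apply: val_inj.
have transp_ord (x : 'I_N.+1) : transp k x < N.+1 by rewrite ltnS transp_le // -ltnS.
by rewrite !ffunE /= inordK ?transp_ord // (inordK (transp_ord (T p))) transpK.
Qed.

Definition adjacent_values T k :=
  [exists a : 'I_n, exists b : 'I_n, exists c : 'I_n, exists d : 'I_n,
    [&& in_shape n a b, in_shape n c d, next_cell a b c d,
        tv T a b == k & tv T c d == k.+1]].

Lemma adjacent_valuesP T k :
  reflect (exists i j i' j', [/\ in_shape n i j, in_shape n i' j',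
             next_cell i j i' j', tv T i j = k & tv T i' j' = k.+1])
          (adjacent_values T k).
Proof.
apply: (iffP idP).
  case/existsP=> a /existsP[b /existsP[c /existsP[d]]] /and5P[hs hs' nx /eqP e /eqP e'].
  by exists a, b, c, d.
case=> i [j [i' [j' [hs hs' nx e e']]]].
have [a [b [? ?]]] := in_shape_ord hs; have [c [d [? ?]]] := in_shape_ord hs'; subst i j i' j'.
by apply/existsP; exists a; apply/existsP; exists b; apply/existsP; exists c;
  apply/existsP; exists d; rewrite hs hs' nx e e' !eqxx.
Qed.

Lemma syt_swap k T : syt_spec T -> 0 < k < N -> ~~ adjacent_values T k ->
  syt_spec (swap_values k T).
Proof.
move=> sT k0N nadj; have /andP[k0 kN] := k0N; split.
- by move=> i j hs; rewrite tv_swap // (syt_out sT hs) transp_small.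
- by move=> i j hs; rewrite tv_swap // transp_gt0 // (syt_gt0 sT).
- by move=> i j i' j' hs hs'; rewrite !tv_swap // => /transp_inj; exact: syt_inj.
- move=> m /andP[m0 mN]; have [|i [j [hs e]]] := syt_onto sT (m := transp k m).
    by rewrite transp_gt0 // transp_le.
  by exists i, j; rewrite tv_swap // e transpK.
- move=> i j i' j' hs hs' nx; rewrite !tv_swap //; apply: transp_lt; first exact: syt_lt.
  rewrite xpair_eqE; apply: contra nadj => /andP[/eqP e /eqP e'].
  by apply/adjacent_valuesP; exists i, j, i', j'.
Qed.

Lemma swap_not_adjacent k T : syt_spec T -> 0 < k < N ->
  ~~ adjacent_values (swap_values k T) k.
Proof.
move=> sT k0N; apply/adjacent_valuesP => -[i [j [i' [j' [hs hs' nx]]]]].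
rewrite !tv_swap // => /eqP; rewrite transp_eq transp_k => /eqP e.
move/eqP; rewrite transp_eq transp_k1 => /eqP e'.
by have := syt_lt sT hs hs' nx; rewrite e e' ltnNge leqnSn.
Qed.

End Staircase.

Section Cut.
Variables (n : nat) (Q : nat -> nat -> bool).
Local Notation N := (ncells n).
Implicit Types (T : filling n) (i j k m : nat).
Hypothesis n2 : 2 <= n.
Hypothesis Q_down : forall i j i' j', next_cell i j i' j' -> Q i' j' -> Q i j.
Hypothesis Q_first : Q 1 1.
Hypothesis Q_last : ~~ Q n.-1 n.-1.

Definition in_cut T m :=
  [exists a : 'I_n, exists b : 'I_n, [&& in_shape n a b, tv T a b == m & Q a b]].
Definition exits_cut T k := in_cut T k && ~~ in_cut T k.+1.
Definition enters_cut T k := ~~ in_cut T k && in_cut T k.+1.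

Lemma in_cut_tv T i j : syt_spec T -> in_shape n i j -> in_cut T (tv T i j) = Q i j.
Proof.
move=> sT hs; apply/existsP/idP => [[a /existsP[b /and3P[hs' /eqP e q]]]|q].
  by case: (syt_inj sT hs' hs e) => <- <-.
have [a [b [? ?]]] := in_shape_ord hs; subst i j.
by exists a; apply/existsP; exists b; rewrite hs eqxx.
Qed.

Lemma in_cut_swap k T m : 0 < k < N ->
  in_cut (swap_values k T) m = in_cut T (transp k m).
Proof.
move=> k0N; apply: eq_existsb => a; apply: eq_existsb => b.
by rewrite tv_swap // transp_eq.
Qed.

Lemma enters_cut_swap k T : 0 < k < N ->
  enters_cut (swap_values k T) k = exits_cut T k.
Proof. by move=> k0N; rewrite /enters_cut !in_cut_swap // transp_k transp_k1 andbC. Qed.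

Lemma enters_cut_not_adjacent T k : syt_spec T -> enters_cut T k -> ~~ adjacent_values T k.
Proof.
move=> sT /andP[nqk qk1]; apply/adjacent_valuesP => -[i [j [i' [j' [hs hs' nx e e']]]]].
move: nqk qk1; rewrite -e' -e !in_cut_tv // => /negP nq /(Q_down nx); exact: nq.
Qed.

Lemma swap_enters_cut k T : 0 < k < N ->
  (swap_values k T \in SYTs n) && enters_cut (swap_values k T) k =
  [&& T \in SYTs n, exits_cut T k & ~~ adjacent_values T k].
Proof.
move=> k0N; have /andP[_ kN] := k0N; rewrite enters_cut_swap //.
apply/andP/and3P => [[/SYTsP sT' ex]|[/SYTsP sT ex nadj]]; last first.
  by split=> //; apply/SYTsP/syt_swap.
have en' : enters_cut (swap_values k T) k by rewrite enters_cut_swap.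
split=> //; rewrite -(swap_valuesK kN T).
- exact/SYTsP/syt_swap/(enters_cut_not_adjacent sT').
- exact: swap_not_adjacent.
Qed.

Lemma sum_exits_cut k : 0 < k < N ->
  \sum_(T in SYTs n) (exits_cut T k : nat) =
  \sum_(T in SYTs n) (enters_cut T k : nat) +
  \sum_(T in SYTs n) (exits_cut T k && adjacent_values T k : nat).
Proof.
move=> k0N; have /andP[_ kN] := k0N.
have -> : \sum_(T in SYTs n) (enters_cut T k : nat) =
          \sum_(T in SYTs n) (exits_cut T k && ~~ adjacent_values T k : nat).
  apply: (sum_in_involutive (swap_valuesK kN)) => T.
  by rewrite swap_enters_cut.
rewrite -big_split; apply: eq_bigr => T _.
by case: (exits_cut T k); case: (adjacent_values T k).
Qed.

Lemma sum_exits_cut_tableau T : syt_spec T ->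
  \sum_(1 <= k < N) (exits_cut T k : nat) = \sum_(1 <= k < N) (enters_cut T k : nat) + 1.
Proof.
move=> sT; have first_in : in_cut T 1.
  by rewrite -(tv_first sT n2) in_cut_tv // /in_shape; lia.
have last_out : in_cut T N = false.
  by rewrite -(tv_last sT n2) in_cut_tv ?(negbTE Q_last) // /in_shape; lia.
have N1 : 1 <= N by rewrite bin_gt0.
have := telescope_bool (in_cut T) N1; rewrite first_in last_out add0n => <-.
by rewrite addnC.
Qed.

Theorem sum_cut_adjacencies :
  \sum_(T in SYTs n) \sum_(1 <= k < N) (exits_cut T k && adjacent_values T k : nat) =
  #|SYTs n|.
Proof.
have per_tableau : \sum_(T in SYTs n) \sum_(1 <= k < N) (exits_cut T k : nat) =
    \sum_(T in SYTs n) \sum_(1 <= k < N) (enters_cut T k : nat) + #|SYTs n|.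
  rewrite -sum1_card -big_split; apply: eq_bigr => T /SYTsP.
  exact: sum_exits_cut_tableau.
have per_value : \sum_(1 <= k < N) \sum_(T in SYTs n) (exits_cut T k : nat) =
    \sum_(1 <= k < N) \sum_(T in SYTs n) (enters_cut T k : nat) +
    \sum_(1 <= k < N) \sum_(T in SYTs n) (exits_cut T k && adjacent_values T k : nat).
  by rewrite -big_split; apply: eq_big_nat => k; exact: sum_exits_cut.
rewrite exchange_big.
apply/(@addnI (\sum_(1 <= k < N) \sum_(T in SYTs n) (enters_cut T k : nat))).
by rewrite -per_value exchange_big per_tableau exchange_big.
Qed.

End Cut.

Section RowReading.
Variable n : nat.
Local Notation N := (ncells n).
Implicit Types (i j : nat).

Definition shape_cells := [set p : 'I_n * 'I_n | in_shape n p.1 p.2].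

Lemma sum_shape_column j : j < n -> \sum_(0 <= i < n) (in_shape n i j : nat) = j.
Proof.
move=> jn; rewrite (big_cat_nat _ (n := j.+1)) //= [X in _ + X]big1_seq ?addn0; last first.
  move=> i /andP[_]; rewrite mem_index_iota => /andP[ji _].
  by have -> : in_shape n i j = false by apply/negbTE; rewrite /in_shape; lia.
rewrite big_nat_recl //= (eq_big_nat _ _ (F2 := fun=> 1)) ?sum_nat_const_nat ?muln1 ?subn0 //.
by move=> i /andP[_ ij]; have -> : in_shape n i.+1 j by rewrite /in_shape; lia.
Qed.

Lemma card_shape_cells : #|shape_cells| = N.
Proof.
transitivity (\sum_(b : 'I_n) \sum_(a : 'I_n) (in_shape n a b : nat)).
  rewrite exchange_big pair_big -sum1_card big_mkcond /=.
  by apply: eq_bigr => -[a b] _; rewrite inE; case: in_shape.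
rewrite /ncells -bin2_sum big_mkord; apply: eq_bigr => b _.
by rewrite -(big_mkord xpredT (fun a => (in_shape n a b : nat))) sum_shape_column.
Qed.

Definition lex_le (p q : nat * nat) := (p.1 < q.1) || (p.1 == q.1) && (p.2 <= q.2).

Definition rank i j :=
  #|[set p in shape_cells | lex_le (nat_of_ord p.1, nat_of_ord p.2) (i, j)]|.

Lemma rank_le i j : rank i j <= N.
Proof.
by rewrite -card_shape_cells; apply/subset_leq_card/subsetP => p; rewrite inE => /andP[].
Qed.

Lemma rank_gt0 i j : in_shape n i j -> 0 < rank i j.
Proof.
move=> hs; have [a [b [? ?]]] := in_shape_ord hs; subst i j.
by apply/card_gt0P; exists (a, b); rewrite !inE hs /lex_le eqxx leqnn orbT.
Qed.

Lemma rank_lt i j i' j' : in_shape n i' j' -> lex_le (i, j) (i', j') -> (i, j) != (i', j') ->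
  rank i j < rank i' j'.
Proof.
move=> hs' lt_ij; rewrite xpair_eqE => ne_ij; have [c [d [? ?]]] := in_shape_ord hs'.
subst i' j'; apply/proper_card/properP; split.
  by apply/subsetP => p; rewrite !inE => /andP[-> /=]; move: lt_ij; rewrite /lex_le /=; lia.
by exists (c, d); rewrite !inE hs' /lex_le /= ?eqxx ?leqnn ?orbT //; move: lt_ij ne_ij;
  rewrite /lex_le /=; lia.
Qed.

Lemma rank_inj i j i' j' : in_shape n i j -> in_shape n i' j' -> rank i j = rank i' j' ->
  (i, j) = (i', j').
Proof.
move=> hs hs' e; apply/eqP; apply: contraTT isT => ne.
have [le|lt] := boolP (lex_le (i, j) (i', j')).
  by have := rank_lt hs' le ne; rewrite e ltnn.
have le : lex_le (i', j') (i, j) by move: lt; rewrite /lex_le /=; lia.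
by have := rank_lt hs le; rewrite eq_sym e ltnn => /(_ ne).
Qed.

Definition row_reading : filling n :=
  [ffun p : 'I_n * 'I_n => if in_shape n p.1 p.2 then inord (rank p.1 p.2) else ord0].

Lemma tv_row_reading i j : tv row_reading i j = if in_shape n i j then rank i j else 0.
Proof.
have [/andP[hi hj]|hij] := boolP ((i < n) && (j < n)); last first.
  rewrite tv_out //; case: ifP => // /in_shape_ord[a [b [ea eb]]].
  by rewrite -ea -eb !ltn_ord in hij.
by rewrite tvE ffunE /=; case: ifP => // _; rewrite inordK // ltnS rank_le.
Qed.

Lemma row_reading_syt : syt_spec row_reading.
Proof.
have inj : forall i j i' j', in_shape n i j -> in_shape n i' j' ->
    tv row_reading i j = tv row_reading i' j' -> (i, j) = (i', j').
  by move=> i j i' j' hs hs'; rewrite !tv_row_reading hs hs'; exact: rank_inj.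
split => //.
- by move=> i j hs; rewrite tv_row_reading (negbTE hs).
- by move=> i j hs; rewrite tv_row_reading hs rank_gt0.
- move=> m /andP[m0 mN].
  have sub : row_reading @: shape_cells \subset [set k : 'I_N.+1 | 0 < k].
    apply/subsetP => _ /imsetP[[a b] hs ->]; rewrite inE in hs.
    by rewrite inE -tv_ord tv_row_reading hs rank_gt0.
  have : row_reading @: shape_cells = [set k : 'I_N.+1 | 0 < k].
    apply/eqP; rewrite eqEcard sub /=.
    have -> : [set k : 'I_N.+1 | 0 < k] = [set~ ord0] by apply/setP => k; rewrite !inE lt0n.
    rewrite cardsC1 card_ord card_in_imset ?card_shape_cells // => -[a b] [c d].
    rewrite !inE => /= hs hs' /(congr1 (@nat_of_ord _)); rewrite -!tv_ord.
    by case/(inj _ _ _ _ hs hs') => /val_inj-> /val_inj->.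
  move/setP/(_ (inord m)); rewrite !inE inordK // m0 => /imsetP[[a b]].
  by rewrite inE => hs e; exists a, b; rewrite tv_ord -e inordK.
- move=> i j i' j' hs hs' nx; rewrite !tv_row_reading hs hs'; apply: rank_lt => //;
    move: nx; rewrite /next_cell /lex_le !xpair_eqE /=; lia.
Qed.

Lemma SYTs_nonempty : 0 < #|SYTs n|.
Proof. by apply/card_gt0P; exists row_reading; apply/SYTsP/row_reading_syt. Qed.

End RowReading.

Section Adjacencies.
Variables (n : nat) (T : filling n).
Local Notation N := (ncells n).
Hypothesis sT : syt_spec T.

Lemma hadj_col_cut c : hadj_col T c =
  \sum_(1 <= k < N) (exits_cut (fun _ j => j <= c) T k && adjacent_values T k).
Proof.
apply: (card_eq_sum_nat (f := fun a : 'I_n => tv T a c)).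
- move=> a a'; rewrite !inE => /and3P[hs _ _] /and3P[hs' _ _] e.
  by case: (syt_inj sT hs hs' e) => /val_inj.
- move=> a; rewrite inE => /and3P[hs hs' /eqP e]; rewrite (syt_gt0 sT hs) /=.
  by rewrite -ltnS -e ltnS tv_le.
move=> k _; apply/andP/existsP.
  case=> /andP[cut uncut] /adjacent_valuesP[i [j [i' [j' [hs hs' nx e e']]]]].
  rewrite -e' -e !in_cut_tv // in cut uncut.
  case/orP: nx => /eqP[? ?]; subst i' j'; last by rewrite cut in uncut.
  have jc : j = c by lia.
  have [a [b [? ?]]] := in_shape_ord hs; subst i j.
  by exists a; rewrite inE hs hs' e e' !eqxx.
case=> a /andP[]; rewrite inE => /and3P[hs hs' /eqP e] /eqP <-.
rewrite /exits_cut -e !in_cut_tv // leqnn ltnn; split=> //.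
by apply/adjacent_valuesP; exists a, c, a, c.+1; rewrite /next_cell eqxx.
Qed.

Lemma vadj_row_cut r : vadj_row T r =
  \sum_(1 <= k < N) (exits_cut (fun i _ => i <= r) T k && adjacent_values T k).
Proof.
apply: (card_eq_sum_nat (f := fun b : 'I_n => tv T r b)).
- move=> b b'; rewrite !inE => /and3P[hs _ _] /and3P[hs' _ _] e.
  by case: (syt_inj sT hs hs' e) => /val_inj.
- move=> b; rewrite inE => /and3P[hs hs' /eqP e]; rewrite (syt_gt0 sT hs) /=.
  by rewrite -ltnS -e ltnS tv_le.
move=> k _; apply/andP/existsP.
  case=> /andP[cut uncut] /adjacent_valuesP[i [j [i' [j' [hs hs' nx e e']]]]].
  rewrite -e' -e !in_cut_tv // in cut uncut.
  case/orP: nx => /eqP[? ?]; subst i' j'; first by rewrite cut in uncut.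
  have ir : i = r by lia.
  have [a [b [? ?]]] := in_shape_ord hs; subst i j.
  by exists b; rewrite inE hs hs' e e' !eqxx.
case=> b /andP[]; rewrite inE => /and3P[hs hs' /eqP e] /eqP <-.
rewrite /exits_cut -e !in_cut_tv // leqnn ltnn; split=> //.
by apply/adjacent_valuesP; exists r, b, r.+1, b; rewrite /next_cell eqxx orbT.
Qed.

End Adjacencies.

Lemma expect_SYT_eq1 n (X : filling n -> nat) :
  \sum_(T in SYTs n) X T = #|SYTs n| -> expect_SYT X = 1%R.
Proof.
by move=> e; rewrite /expect_SYT e divff // pnatr_eq0 -lt0n SYTs_nonempty.
Qed.

Theorem mainTheorem12 (n : nat) (hn : 2 <= n) :
  (forall c : nat, 1 <= c -> c < n - 1 ->
     @expect_SYT n (fun T => @hadj_col n T c) = 1%R) /\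
  (forall r : nat, 1 <= r -> r < n - 1 ->
     @expect_SYT n (fun T => @vadj_row n T r) = 1%R).
Proof.
split=> [c c1 cn | r r1 rn]; apply: expect_SYT_eq1.
- rewrite -(sum_cut_adjacencies (Q := fun _ j => j <= c)) //; last first.
  + by rewrite -ltnNge; lia.
  + by move=> i j i' j' /orP[] /eqP[_ ->] //; lia.
  by apply: eq_bigr => T /SYTsP /hadj_col_cut.
- rewrite -(sum_cut_adjacencies (Q := fun i _ => i <= r)) //; last first.
  + by rewrite -ltnNge; lia.
  + by move=> i j i' j' /orP[] /eqP[-> _] //; lia.
  by apply: eq_bigr => T /SYTsP /vadj_row_cut.
Qed.
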